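(* In a finite dynamic game as described in the context, if $K^i$ is unilaterally sufficient information for player $i$, then for every Bayes–Nash equilibrium behavioral strategy profile $g=(g^j)_{j\in\mathcal{I}}$ there exists a $K^i$-based strategy $\rho^i$ such that $(\rho^i,g^{-i})$ is a Bayes–Nash equilibrium and $J^j(\rho^i,g^{-i})=J^j(g)$ for all $j\in\mathcal{I}$.
   Context: Game model: finite set of players $\mathcal{I}$, times $\mathcal{T}=\{1,\dots,T\}$. At time $t$ each player $i$ takes action $U_t^i\in\mathcal{U}_t^i$, obtains reward $R_t^i\in[-1,1]$ and learns new information $Z_t^i\in\mathcal{Z}_t^i$. There is a state $X_t\in\mathcal{X}_t$ with $(X_{t+1},Z_t,R_t)=f_t(X_t,U_t,W_t)$ for fixed functions $f_t$. Primitive random variables $(X_1,H_1)$ and $W_1,\dots,W_T$ are mutually independent with commonly known distributions. All sets are finite. Perfect recall: $H_t^i=(H_1^i,Z_{1:t-1}^i)\in\mathcal{H}_t^i$, and $U_t^i$ is a component of $Z_t^i$. Behavioral strategy $g_t^i:\mathcal{H}_t^i\to\Delta(\mathcal{U}_t^i)$; payoff $J^j(g)=\mathbb{E}^g[\sum_t R_t^j]$. A profile $g$ is a Bayes–Nash equilibrium if $J^j(g)\ge J^j(\tilde g^j,g^{-j})$ for all $j$ and all behavioral $\tilde g^j$. A realization is admissible under $g$ if it has positive probability under $g$. Compression: $K_1^i=\iota_1^i(H_1^i)$, $K_t^i=\iota_t^i(K_{t-1}^i,Z_{t-1}^i)$ for fixed maps, finite value sets $\mathcal{K}_t^i$; $k_t^i$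 is the compression of $h_t^i$; a $K^i$-based strategy has $\rho_t^i:\mathcal{K}_t^i\to\Delta(\mathcal{U}_t^i)$. Unilaterally sufficient information (USI): $K^i$ is USI for player $i$ if there exist $F_t^{i,g^i}:\mathcal{K}_t^i\to\Delta(\mathcal{H}_t^i)$ depending only on $g^i$ and $\Phi_t^{i,g^{-i}}:\mathcal{K}_t^i\to\Delta(\mathcal{X}_t\times\mathcal{H}_t^{-i})$ depending only on $g^{-i}$ with $\Pr^g(x_t,h_t\mid k_t^i)=F_t^{i,g^i}(h_t^i\mid k_t^i)\Phi_t^{i,g^{-i}}(x_t,h_t^{-i}\mid k_t^i)$ for all behavioral profiles $g$, all $t$, all $k_t^i$ admissible under $g$ (with $x_t,h_t^i,h_t^{-i}$ ranging independently; the left side is $0$ if they disagree on shared components). *)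

From HB Require Import structures.
From mathcomp Require Import all_boot all_order all_algebra.
From mathcomp Require Import reals.

Set Implicit Arguments.
Unset Strict Implicit.
Unset Printing Implicit Defensive.

Import Order.TTheory GRing.Theory Num.Theory.
Local Open Scope ring_scope.

(* Times are 0-indexed: the paper's time t corresponds to t-1 here, so the
   horizon T = {1,...,T} becomes {0,...,T-1}.  Families indexed by nat are
   only relevant for t < horizon (resp. t <= horizon for states). *)

Definition is_dist (R : realType) (A : finType) (p : A -> R) : Prop :=
  (forall a, 0 <= p a) /\ \sum_(a : A) p a = 1.

Record game (R : realType) := Game {
  player : finType;
  horizon : nat;
  stateT : nat -> finType;
  actT : player -> nat -> finType;
  infoT : player -> nat -> finType;
  noiseT : nat -> finType;
  init_infoT : player -> finType;
  init_dist : (stateT 0 * {dffun forall i : player, init_infoT i})%type -> R;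
  noise_dist : forall t, noiseT t -> R;
  (* (X_{t+1}, Z_t, R_t) = f_t(X_t, U_t, W_t) *)
  dyn : forall t, stateT t -> {dffun forall i : player, actT i t} -> noiseT t ->
        (stateT t.+1 * {dffun forall i : player, infoT i t} * (player -> R))%type;
  (* U_t^i is a component of Z_t^i: the projection extracting it *)
  act_of_info : forall i t, infoT i t -> actT i t
}.

Section GameDefs.
Context {R : realType} (G : game R).

Definition game_wf : Prop :=
  is_dist (@init_dist R G)
  /\ (forall t, (t < horizon G)%N -> is_dist (@noise_dist R G t))
  /\ (forall t, (t < horizon G)%N -> forall (x : stateT G t) u w (j : player G),
        -1 <= (dyn x u w).2 j <= 1)
  /\ (forall t, (t < horizon G)%N -> forall (x : stateT G t) u w (j : player G),
        act_of_info ((dyn x u w).1.2 j) = u j).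

Fixpoint hist (i : player G) (t : nat) : finType :=
  match t with
  | 0 => init_infoT i
  | t'.+1 => (hist i t' * infoT i t')%type
  end.

Definition jhist (t : nat) := {dffun forall i : player G, hist i t}.

Definition ohist (i : player G) (t : nat) :=
  {dffun forall j : {j : player G | j != i}, hist (val j) t}.

Definition others (i : player G) (t : nat) (h : jhist t) : ohist i t :=
  [ffun j => h (val j)].

Definition hext (t : nat) (h : jhist t) (z : {dffun forall i : player G, infoT i t})
  : jhist t.+1 := [ffun i => ((h i, z i) : hist i t.+1)].

Definition strat (i : player G) := forall t, hist i t -> actT i t -> R.
Definition profile := forall i : player G, strat i.

Definition valid_strat (i : player G) (s : strat i) : Prop :=
  forall t, (t < horizon G)%N -> forall h, is_dist (s t h).
Definition valid_profile (g : profile) : Prop := forall i, valid_strat (g i).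

Definition act_prob (g : profile) t (h : jhist t)
  (u : {dffun forall i : player G, actT i t}) : R :=
  \prod_(i : player G) g i t (h i) (u i).

Fixpoint pr (g : profile) (t : nat) : stateT G t -> jhist t -> R :=
  match t return stateT G t -> jhist t -> R with
  | 0 => fun x h => init_dist (x, h)
  | t'.+1 => fun x' h' =>
      \sum_(x : stateT G t') \sum_(h : jhist t') pr g x h *
        \sum_(u : {dffun forall i : player G, actT i t'}) act_prob g h u *
          \sum_(w : noiseT G t') noise_dist w *
            (((dyn x u w).1.1 == x') && (hext h (dyn x u w).1.2 == h'))%:R
  end.

Definition exp_reward (g : profile) (t : nat) (j : player G) : R :=
  \sum_(x : stateT G t) \sum_(h : jhist t) pr g x h *
    \sum_(u : {dffun forall i : player G, actT i t}) act_prob g h u *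
      \sum_(w : noiseT G t) noise_dist w * (dyn x u w).2 j.

Definition payoff (g : profile) (j : player G) : R :=
  \sum_(t < horizon G) exp_reward g t j.

Definition BNE (g : profile) : Prop :=
  valid_profile g /\
  forall j (s : strat j), valid_strat s -> payoff (dfwith g s) j <= payoff g j.

Record compression (i : player G) := Compression {
  compT : nat -> finType;
  comp0 : init_infoT i -> compT 0;
  compS : forall t, compT t -> infoT i t -> compT t.+1
}.

Fixpoint kappa (i : player G) (C : compression i) (t : nat) : hist i t -> compT C t :=
  match t return hist i t -> compT C t with
  | 0 => fun h => @comp0 i C h
  | t'.+1 => fun hz => @compS i C t' (kappa C hz.1) hz.2
  end.

Definition pr_k (i : player G) (C : compression i) (g : profile) t (k : compT C t) : R :=
  \sum_(x : stateT G t) \sum_(h : jhist t) pr g x h * (kappa C (h i) == k)%:R.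

Definition pr_cond (i : player G) (C : compression i) (g : profile) t (k : compT C t)
  (x : stateT G t) (h : jhist t) : R :=
  pr g x h * (kappa C (h i) == k)%:R / pr_k g k.

Definition USI (i : player G) (C : compression i) : Prop :=
  exists (F : strat i -> forall t, compT C t -> hist i t -> R)
         (Phi : profile -> forall t, compT C t -> (stateT G t * ohist i t)%type -> R),
    (forall g g' : profile,
        (forall j, j != i -> forall t h u, g j t h u = g' j t h u) ->
        forall t k xo, Phi g t k xo = Phi g' t k xo)
    /\ (forall s : strat i, valid_strat s ->
          forall t, (t < horizon G)%N -> forall k, is_dist (F s t k))
    /\ (forall g : profile, valid_profile g ->
          forall t, (t < horizon G)%N -> forall k, is_dist (Phi g t k))
    /\ (forall g : profile, valid_profile g ->
          forall t, (t < horizon G)%N -> forall k, 0 < pr_k g k ->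
          forall x (h : jhist t),
            pr_cond g k x h = F (g i) t k (h i) * Phi g t k (x, others i h)).

Definition kstrat (i : player G) (C : compression i) :=
  forall t, compT C t -> actT i t -> R.

Definition valid_kstrat (i : player G) (C : compression i) (rho : kstrat C) : Prop :=
  forall t, (t < horizon G)%N -> forall k, is_dist (rho t k).

Definition kbased (i : player G) (C : compression i) (rho : kstrat C) : strat i :=
  fun t h => rho t (kappa C h).

End GameDefs.

From HB Require Import structures.
From mathcomp Require Import all_boot all_order all_algebra.
From mathcomp Require Import reals boolp.
Import Order.TTheory GRing.Theory Num.Theory.
Local Open Scope ring_scope.

Set Implicit Arguments.
Unset Strict Implicit.
Unset Printing Implicit Defensive.

(* Player i's K-based strategy is rho_t(u | k) = sum_h F_t(h | k) g^i_t(u | h): its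
   behaviour averaged over the conditional law F_t of H^i_t given K^i_t = k.  By USI,
   given K^i_t, the history H^i_t has law F_t(. | K^i_t) and is independent of
   (X_t, H^-i_t); hence replacing g^i by rho does not change the expectation of any
   function of (X_t, H^-i_t, K^i_t) and of the current joint action.  Since K^i_{t+1}
   is computed from K^i_t and Z^i_t, induction on t shows that (X_t, H^-i_t, K^i_t) has
   the same law under g and under (rho, g^-i), so all payoffs agree.  As F depends only
   on g^i, a deviation of a player j <> i from (rho, g^-i) has the same payoffs as the
   same deviation from g, and a deviation of i from (rho, g^-i) is one from g. *)

Section Dfwith.
Variables (I : eqType) (T : I -> Type) (f : forall j, T j).

Lemma dfwith_dfwith (i : I) (x y : T i) : dfwith (dfwith f x) y = dfwith f y.
Proof.
apply: functional_extensionality_dep => j.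
by case: (eqVneq i j) => [<-|ij]; rewrite ?dfwith_in // !dfwith_out.
Qed.

Lemma dfwithC (i j : I) (x : T i) (y : T j) :
  i != j -> dfwith (dfwith f x) y = dfwith (dfwith f y) x.
Proof.
move=> ij; apply: functional_extensionality_dep => l.
case: (eqVneq j l) => [<-|jl]; first by rewrite dfwith_in dfwith_out // dfwith_in.
case: (eqVneq i l) => [<-|il]; first by rewrite [RHS]dfwith_in dfwith_out ?dfwith_in // eq_sym.
by rewrite !dfwith_out.
Qed.

End Dfwith.

Section Kernels.
Variables (R : realType) (I J : finType).

Lemma exchange_big_kernel (c : I -> R) (K : I -> J -> R) (f : J -> R) :
  \sum_j (\sum_i c i * K i j) * f j = \sum_i c i * \sum_j K i j * f j.
Proof.
under eq_bigr do rewrite mulr_suml; rewrite exchange_big /=.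
by apply: eq_bigr => i _; rewrite mulr_sumr; apply: eq_bigr => j _; rewrite mulrA.
Qed.

Lemma sum_pair_indicator (a : I) (b : J) (f : I * J -> R) :
  \sum_(p : I * J) ((a == p.1) && (b == p.2))%:R * f p = f (a, b).
Proof.
rewrite (bigD1 (a, b)) //= !eqxx mul1r big1 ?addr0 // => -[x y] /= ne.
suff -> : ((a == x) && (b == y)) = false by rewrite mul0r.
by apply/negbTE; apply: contra ne => /andP[/eqP <- /eqP <-].
Qed.

End Kernels.

Section JointHistories.
Variables (R : realType) (G : game R) (i : player G) (t : nat).

Definition join (hi : hist i t) (o : ohist i t) : jhist G t :=
  [ffun j => match i =P j with
             | ReflectT e => ecast j (hist j t) e hi
             | ReflectF ne => o (exist _ j (contra_not_neq (@esym _ _ _) ne))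
             end].

Lemma join_self hi o : join hi o i = hi.
Proof. by rewrite ffunE; case: eqP => // e; rewrite eq_axiomK. Qed.

Lemma others_join hi o : others i (join hi o) = o.
Proof.
apply/ffunP => -[j ji]; rewrite !ffunE /=; case: eqP => [ij|ne].
  by exfalso; move: ji; rewrite -ij eqxx.
by congr (o (exist _ j _)); apply: bool_irrelevance.
Qed.

Lemma join_others (h : jhist G t) : join (h i) (others i h) = h.
Proof.
by apply/ffunP => j; rewrite !ffunE; case: eqP => [e|ne] /=; [subst j | rewrite ffunE].
Qed.

Lemma sum_jhist (f : hist i t -> ohist i t -> R) :
  \sum_(h : jhist G t) f (h i) (others i h) = \sum_hi \sum_o f hi o.
Proof.
rewrite pair_bigA /= (reindex (fun p : hist i t * ohist i t => join p.1 p.2)) /=.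
  by apply: eq_bigr => -[hi o] _; rewrite join_self others_join.
exists (fun h : jhist G t => (h i, others i h)) => [[hi o] _|h _] /=.
  by rewrite join_self others_join.
by rewrite join_others.
Qed.

Definition others_prob (g : profile G) (o : ohist i t)
  (u : {dffun forall j : player G, actT j t}) : R :=
  \prod_(s : {j : player G | j != i}) g (val s) t (o s) (u (val s)).

Lemma act_probE (g : profile G) (h : jhist G t) u :
  act_prob g h u = g i t (h i) (u i) * others_prob g (others i h) u.
Proof.
rewrite /act_prob (bigD1 i) //=; congr (_ * _).
rewrite /others_prob (reindex_omap (val : {j : player G | j != i} -> _) insub).
  apply: eq_big => [[j ji]|[j ji] _] /=; last by rewrite ffunE.
  by rewrite ji insubT; apply/eqP.
by move=> j ji; rewrite insubT.
Qed.

Lemma others_prob_dfwith (g : profile G) (s : strat i) o u :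
  others_prob (dfwith g s) o u = others_prob g o u.
Proof. by apply: eq_bigr => -[j ji] _ /=; rewrite dfwith_out // eq_sym. Qed.

Definition ohext (o : ohist i t) (z : {dffun forall j : player G, infoT j t}) :
  ohist i t.+1 := [ffun s => ((o s, z (val s)) : hist (val s) t.+1)].

Lemma others_hext (h : jhist G t) z : others i (hext h z) = ohext (others i h) z.
Proof. by apply/ffunP => s; rewrite !ffunE. Qed.

End JointHistories.

Section Expectation.
Variables (R : realType) (G : game R).

Definition expect (g : profile G) (t : nat) (f : stateT G t -> jhist G t -> R) : R :=
  \sum_(x : stateT G t) \sum_(h : jhist G t) pr g x h * f x h.
#[global] Arguments expect g t f : clear implicits.

Lemma pr_ge0 (g : profile G) : game_wf G -> valid_profile g ->
  forall t, (t <= horizon G)%N -> forall x h, 0 <= pr g (t := t) x h.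
Proof.
move=> [[init_ge0 _] [noise_is_dist _]] vg; elim=> [|t IH] Ht x h /=.
  exact: init_ge0.
have [noise_ge0 _] := noise_is_dist t Ht.
apply: sumr_ge0 => x0 _; apply: sumr_ge0 => h0 _; rewrite mulr_ge0 ?IH 1?ltnW //.
apply: sumr_ge0 => u _; rewrite mulr_ge0 //.
  by apply: prodr_ge0 => j _; have [-> _] := vg j t Ht (h0 j).
by apply: sumr_ge0 => w _; rewrite mulr_ge0.
Qed.

Lemma expect_sum (g : profile G) t (I : finType) (f : stateT G t -> jhist G t -> I -> R) :
  expect g t (fun x h => \sum_u f x h u) = \sum_u expect g t (fun x h => f x h u).
Proof.
rewrite /expect [RHS]exchange_big; apply: eq_bigr => x _.
by rewrite [RHS]exchange_big; apply: eq_bigr => h _; rewrite mulr_sumr.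
Qed.

Lemma expectS (g : profile G) t (f : stateT G t.+1 -> jhist G t.+1 -> R) :
  expect g t.+1 f =
  expect g t (fun x h => \sum_u act_prob g h u *
    \sum_(w : noiseT G t) noise_dist w * f (dyn x u w).1.1 (hext h (dyn x u w).1.2)).
Proof.
rewrite /expect /= !pair_bigA /=.
under eq_bigr do rewrite pair_bigA /=.
rewrite (exchange_big_kernel (fun p => pr g p.1 p.2)); apply: eq_bigr => p _.
rewrite exchange_big_kernel; congr (_ * _); apply: eq_bigr => u _.
rewrite exchange_big_kernel; congr (_ * _); apply: eq_bigr => w _.
by rewrite (sum_pair_indicator _ _ (fun p => f p.1 p.2)).
Qed.

End Expectation.

Section Compression.
Variables (R : realType) (G : game R) (i : player G) (C : compression i).

Definition obs_expect (g : profile G) (t : nat)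
  (phi : stateT G t -> ohist i t -> compT C t -> R) : R :=
  expect g t (fun x h => phi x (others i h) (kappa C (h i))).
#[global] Arguments obs_expect g t phi : clear implicits.

Lemma expect_kappa_split (g : profile G) t (f : stateT G t -> jhist G t -> compT C t -> R) :
  expect g t (fun x h => f x h (kappa C (h i))) =
  \sum_k expect g t (fun x h => (kappa C (h i) == k)%:R * f x h k).
Proof.
rewrite -expect_sum; apply: eq_bigr => x _; apply: eq_bigr => h _; congr (_ * _).
rewrite (bigD1 (kappa C (h i))) //= eqxx mul1r big1 ?addr0 // => k.
by rewrite eq_sym => /negbTE ->; rewrite mul0r.
Qed.

Definition obs_step t (phi : stateT G t.+1 -> ohist i t.+1 -> compT C t.+1 -> R)
  (x : stateT G t) (o : ohist i t) (k : compT C t) (u : {dffun forall j, actT j t}) : R :=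
  \sum_(w : noiseT G t) noise_dist w *
    phi (dyn x u w).1.1 (ohext o (dyn x u w).1.2) (compS k ((dyn x u w).1.2 i)).

Lemma obs_expectS (g : profile G) t phi :
  obs_expect g t.+1 phi =
  expect g t (fun x h => \sum_u act_prob g h u * obs_step phi x (others i h) (kappa C (h i)) u).
Proof.
rewrite /obs_expect expectS; apply: eq_bigr => x _; apply: eq_bigr => h _.
by under eq_bigr do under eq_bigr do rewrite others_hext ffunE.
Qed.

Section Factorization.
Variables (g : profile G) (t : nat) (F : compT C t -> hist i t -> R)
  (Phi : compT C t -> (stateT G t * ohist i t)%type -> R).
Hypothesis pr_g_ge0 : forall x (h : jhist G t), 0 <= pr g x h.
Hypothesis F_dist : forall k, is_dist (F k).
Hypothesis pr_cond_factor : forall k, 0 < pr_k g k -> forall x (h : jhist G t),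
  pr_cond g k x h = F k (h i) * Phi k (x, others i h).

Lemma pr_indicator_factor k x (h : jhist G t) :
  pr g x h * (kappa C (h i) == k)%:R = pr_k g k * (F k (h i) * Phi k (x, others i h)).
Proof.
have term_ge0 x' (h' : jhist G t) : 0 <= pr g x' h' * (kappa C (h' i) == k)%:R.
  by rewrite mulr_ge0.
have pk_ge0 : 0 <= pr_k g k by do 2 apply: sumr_ge0 => ? _.
have [pk0|pk_neq0] := eqVneq (pr_k g k) 0.
- have row0 : \sum_h' pr g x h' * (kappa C (h' i) == k)%:R = 0.
    by apply: (psumr_eq0P _ pk0) => // x' _; apply: sumr_ge0.
  by rewrite pk0 mul0r; apply: (psumr_eq0P _ row0).
- by rewrite -pr_cond_factor ?lt_def ?pk_neq0 // /pr_cond [RHS]mulrC divfK.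
Qed.

Lemma expect_indicator (f : hist i t -> R) (psi : stateT G t -> ohist i t -> R) k :
  expect g t (fun x h => (kappa C (h i) == k)%:R * (f (h i) * psi x (others i h))) =
  pr_k g k * (\sum_hi F k hi * f hi) * \sum_x \sum_o Phi k (x, o) * psi x o.
Proof.
rewrite /expect; set c := pr_k g k * _; rewrite mulr_sumr /c; apply: eq_bigr => x _.
under eq_bigr do rewrite mulrA pr_indicator_factor -mulrA mulrACA.
by rewrite -mulr_sumr (sum_jhist (fun hi o => F k hi * f hi * (Phi k (x, o) * psi x o)))
  -big_distrlr mulrA.
Qed.

Lemma expect_own_hist_avg (f : hist i t -> R) (psi : stateT G t -> ohist i t -> compT C t -> R) :
  expect g t (fun x h => f (h i) * psi x (others i h) (kappa C (h i))) =
  obs_expect g t (fun x o k => (\sum_hi F k hi * f hi) * psi x o k).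
Proof.
rewrite /obs_expect (expect_kappa_split g (fun x h k => f (h i) * psi x (others i h) k)).
rewrite (expect_kappa_split g (fun x h k => (\sum_hi F k hi * f hi) * psi x (others i h) k)).
apply: eq_bigr => k _.
rewrite (expect_indicator f (fun x o => psi x o k)).
rewrite (expect_indicator (fun=> \sum_hi F k hi * f hi) (fun x o => psi x o k)).
by rewrite -big_distrl /=; have [_ ->] := F_dist k; rewrite mul1r.
Qed.

End Factorization.
End Compression.

Lemma valid_profile_dfwith (R : realType) (G : game R) (g : profile G) j (s : strat j) :
  valid_profile g -> valid_strat s -> valid_profile (dfwith g s).
Proof. by move=> vg vs l; case: (eqVneq j l) => [<-|jl]; rewrite ?dfwith_in ?dfwith_out. Qed.

Section AveragedStrategy.
Variables (R : realType) (G : game R) (i : player G) (C : compression i).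

Definition avg_kstrat (F : forall t, compT C t -> hist i t -> R) (s : strat i) : kstrat C :=
  fun t k a => \sum_hi F t k hi * s t hi a.

(* Otherwise [g i] would be parsed with [i] as the implicit index of [g]. *)
Local Unset Implicit Arguments.
Variables (g : profile G) (F : forall t, compT C t -> hist i t -> R)
  (Phi : forall t, compT C t -> (stateT G t * ohist i t)%type -> R).
Hypothesis wfG : game_wf G.
Hypothesis vg : valid_profile g.
Hypothesis F_dist : forall t, (t < horizon G)%N -> forall k, is_dist (F t k).
Hypothesis pr_cond_factor : forall t, (t < horizon G)%N ->
  forall k, 0 < pr_k g k -> forall x (h : jhist G t),
  pr_cond g k x h = F t k (h i) * Phi t k (x, others i h).
Local Set Implicit Arguments.

Lemma valid_avg_kstrat : valid_kstrat (avg_kstrat F (g i)).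
Proof.
move=> t Ht k; have [F_ge0 F_sum1] := F_dist t Ht k; split.
  by move=> a; apply: sumr_ge0 => hi _; have [s_ge0 _] := vg i t Ht hi; rewrite mulr_ge0.
rewrite /avg_kstrat exchange_big /= -[RHS]F_sum1; apply: eq_bigr => hi _.
by rewrite -mulr_sumr; have [_ ->] := vg i t Ht hi; rewrite mulr1.
Qed.

Local Notation g' := (dfwith g (kbased (avg_kstrat F (g i)))).

Lemma expect_act_kbased t : (t < horizon G)%N ->
  (forall phi : stateT G t -> ohist i t -> compT C t -> R,
     obs_expect g' t phi = obs_expect g t phi) ->
  forall psi : stateT G t -> ohist i t -> compT C t -> {dffun forall j, actT j t} -> R,
  expect g' t (fun x h => \sum_u act_prob g' h u * psi x (others i h) (kappa C (h i)) u) =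
  expect g t (fun x h => \sum_u act_prob g h u * psi x (others i h) (kappa C (h i)) u).
Proof.
move=> Ht same_law psi.
pose avg_psi x o k := \sum_(u : {dffun forall j, actT j t})
  avg_kstrat F (g i) k (u i) * (others_prob g o u * psi x o k u).
transitivity (obs_expect g' t avg_psi).
  apply: eq_bigr => x _; apply: eq_bigr => h _; congr (_ * _); apply: eq_bigr => u _.
  by rewrite (act_probE i) others_prob_dfwith dfwith_in mulrA.
rewrite same_law /obs_expect expect_sum.
under [RHS]eq_bigr do under eq_bigr do under eq_bigr do rewrite (act_probE i) -mulrA.
rewrite [RHS]expect_sum; apply: eq_bigr => u _; symmetry.
exact: (expect_own_hist_avg (pr_ge0 wfG vg (ltnW Ht)) (F_dist t Ht) (pr_cond_factor t Ht)
  (fun hi => g i t hi (u i)) (fun x o k => others_prob g o u * psi x o k u)).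
Qed.

Lemma obs_expect_kbased t : (t <= horizon G)%N ->
  forall phi : stateT G t -> ohist i t -> compT C t -> R,
  obs_expect g' t phi = obs_expect g t phi.
Proof.
elim: t => [//|t IH] Ht phi.
by rewrite !obs_expectS; exact: (expect_act_kbased Ht (IH (ltnW Ht)) (obs_step phi)).
Qed.

Lemma payoff_kbased j : payoff g' j = payoff g j.
Proof.
apply: eq_bigr => -[t Ht] _.
exact: (expect_act_kbased Ht (obs_expect_kbased (ltnW Ht))
  (fun x _ _ u => \sum_w noise_dist w * (dyn x u w).2 j)).
Qed.

End AveragedStrategy.

Theorem lemma6 (R : realType) (G : game R) (i : player G) (C : compression i) :
  game_wf G -> USI C ->
  forall g : profile G, BNE g ->
  exists rho : kstrat C,
    valid_kstrat rho /\
    BNE (dfwith g (kbased rho)) /\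
    (forall j : player G, payoff (dfwith g (kbased rho)) j = payoff g j).
Proof.
move=> wfG [F [Phi [_ [F_dist [_ pr_cond_factor]]]]] g [vg g_BNE].
have payoffE g0 : valid_profile g0 ->
    forall j, payoff (dfwith g0 (kbased (avg_kstrat (F (g0 i)) (g0 i)))) j = payoff g0 j.
  by move=> vg0; apply: (payoff_kbased wfG vg0 (F_dist _ (vg0 i))); apply: pr_cond_factor.
have vrho := valid_avg_kstrat vg (F_dist _ (vg i)).
exists (avg_kstrat (F (g i)) (g i)); split=> //; split; last exact: payoffE.
split=> [|j s vs]; first by apply: valid_profile_dfwith => // t Ht h; apply: vrho.
rewrite payoffE //; have [ij|ij] := eqVneq i j.
  by subst j; rewrite dfwith_dfwith; apply: g_BNE.
have gs_i : dfwith g s i = g i by rewrite dfwith_out // eq_sym.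
by rewrite dfwithC // -gs_i payoffE ?g_BNE //; apply: valid_profile_dfwith.
Qed.
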